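(* Let $P,Q$ be standard CCSK$^{\mathrm P}$ processes. If $P\approx_{\mathrm{FR}}Q$ then $P\approx_{\mathrm{KP}}Q$.
   Context: Names $\mathsf N$ with bijection $\overline\cdot$ onto disjoint co-names; $\mathsf L=\mathsf N\cup\overline{\mathsf N}\cup\{\tau\}$ ($\alpha$ over $\mathsf L$, $\lambda$ over $\mathsf L\setminus\{\tau\}$); keys $\mathsf K$ denumerable. CCSK processes $X::=\mathbf 0\mid\alpha.X\mid X\backslash\lambda\mid X+Y\mid X|Y\mid\alpha[k].X$; $\mathrm{keys}(X)$ keys in $X$; standard means no keys. Directions $D\in\{\mathrm L,\mathrm R\}$, $\bar{\mathrm L}=\mathrm R$, $\bar{\mathrm R}=\mathrm L$. Proof keyed labels $\theta::=\upsilon\alpha[k]\mid\upsilon\langle\upsilon_1\lambda[k],\upsilon_2\overline\lambda[k]\rangle$ ($\upsilon,\upsilon_i\in\{|_{\mathrm L},|_{\mathrm R},+_{\mathrm L},+_{\mathrm R}\}^*$), $\ell(\upsilon\alpha[k])=\alpha$, $\ell(\upsilon\langle\cdots\rangle)=\tau$, $\mathrm{key}(\theta)=k$. Forward CCSK$^{\mathrm P}$ transitions: least relation closed under (act) $\alpha.X\xrightarrow{\alpha[k]}\alpha[k].X$ if $\mathrm{keys}(X)=\emptyset$; (pre) $X\xrightarrow\theta X',\mathrm{key}(\theta)\ne k\Rightarrow\alpha[k].X\xrightarrow\theta\alpha[k].X'$; (res) $X\xrightarrow\theta X',\ell(\theta)\notin\{\lambda,\overline\lambda\}\Rightarrow X\backslash\lambda\xrightarrow\theta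 X'\backslash\lambda$; (par) $X\xrightarrow\theta X',\mathrm{key}(\theta)\notin\mathrm{keys}(Y)\Rightarrow X|Y\xrightarrow{|_{\mathrm L}\theta}X'|Y$, $Y|X\xrightarrow{|_{\mathrm R}\theta}Y|X'$; (syn) $X\xrightarrow{\upsilon_1\lambda[k]}X',Y\xrightarrow{\upsilon_2\overline\lambda[k]}Y'\Rightarrow X|Y\xrightarrow{\langle\upsilon_1\lambda[k],\upsilon_2\overline\lambda[k]\rangle}X'|Y'$; (sum) $X\xrightarrow\theta X',\mathrm{keys}(Y)=\emptyset\Rightarrow X+Y\xrightarrow{+_{\mathrm L}\theta}X'+Y$, $Y+X\xrightarrow{+_{\mathrm R}\theta}Y+X'$. Backward transitions: $Y\rightsquigarrow^\theta X$ iff $X\xrightarrow\theta Y$; $\bar t$ the inverse. Paths: sequences of composable transitions; rooted if source cannot do a backward transition; $\mathrm{orig}(X)$ is obtained by erasing all keys. Connected transitions: a path from the source of one to the target of the other. Independence $\iota$ on proof labels: least relation closed under (C1) $+_D\theta\mathrel\iota+_D\theta'$ if $\theta\mathrel\iota\theta'$; (P1) $|_D\theta\mathrel\iota|_D\theta'$ if $\theta\mathrel\iota\theta'$; (P2$_k$) $|_D\theta\mathrel\iota|_{\bar D}\theta'$ if keys differ; (S1) $|_D\theta\mathrel\iota\langle\theta_{\mathrm L},\theta_{\mathrm R}\rangle$ if $\theta\mathrel\iota\theta_D$; (S2) $\langle\theta_{\mathrm L},\theta_{\mathrm R}\rangle\mathrel\iota|_D\theta$ if $\theta_D\mathrel\iota\theta$;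 (S3) $\langle\theta_1,\theta_2\rangle\mathrel\iota\langle\theta_1',\theta_2'\rangle$ if $\theta_1\mathrel\iota\theta_1'$, $\theta_2\mathrel\iota\theta_2'$. On transitions $t\mathrel\iota u$ iff connected and labels $\iota$. Events: $\sim$ is the smallest equivalence with $t\sim t'$ whenever $t:P\to Q$, $u:P\to R$, $u':Q\to S$, $t':R\to S$ ($u'$ with label/direction of $u$, $t'$ of $t$) and $t\mathrel\iota u$; events $[t]$; forward events are classes of forward transitions; $\bar e=[\bar t]$; $\ell(e)$, $\mathrm{key}(e)$ are $\ell$ and key of the label of any $t\in e$. $\sharp(\varepsilon,e)=0$, $\sharp(tr,e)=\sharp(r,e)+1$ if $t\in e$, $-1$ if $t\in\bar e$, unchanged otherwise. $\mathrm{ev}(X)$: forward events $e$ with $\sharp(r,e)>0$ for some rooted path $r$ with target $X$. $\le_X$ on $\mathrm{keys}(X)$ is the reflexive transitive closure of $\mathrm{ord}(X)$: $\mathrm{ord}(\mathbf 0)=\emptyset$, $\mathrm{ord}(\alpha.X)=\mathrm{ord}(X\backslash\lambda)=\mathrm{ord}(X)$, $\mathrm{ord}(X+Y)=\mathrm{ord}(X|Y)=\mathrm{ord}(X)\cup\mathrm{ord}(Y)$, $\mathrm{ord}(\alpha[n].X)=\mathrm{ord}(X)\cup\{n<k\mid k\in\mathrm{keys}(X)\}$. A bijection $f:\mathrm{ev}(X)\to\mathrm{ev}(Y)$ is label preserving if $\ell(e)=\ell(f(e))$, order preserving if $\mathrm{key}(e)\le_X\mathrm{key}(e')\iff\mathrm{key}(f(e))\le_Y\mathrm{key}(f(e'))$.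 KP bisimulation between standard $X,Y$: a set $R$ of triples $(X',Y',f')$ with $(X,Y,\emptyset)\in R$ such that whenever $(X',Y',f')\in R$: $f'$ is a label- and order-preserving bijection $\mathrm{ev}(X')\to\mathrm{ev}(Y')$; every forward $t:X'\to X''$ is matched by a forward $t':Y'\to Y''$ with $(X'',Y'',f'\cup\{[t]\mapsto[t']\})\in R$, and every forward $t':Y'\to Y''$ by a forward $t:X'\to X''$ with $(X'',Y'',f'\cup\{[t]\mapsto[t']\})\in R$. $X\approx_{\mathrm{KP}}Y$ iff there is a KP bisimulation between $\mathrm{orig}(X)$ and $\mathrm{orig}(Y)$ containing $(X,Y,f)$ for some $f$. FR bisimulation between $X$ and $Y$: a relation $R$ on processes with $X\mathrel RY$ such that whenever $X'\mathrel RY'$: each forward $X'\xrightarrow\theta X''$ is matched by a forward $Y'\xrightarrow{\theta'}Y''$ with $\ell(\theta)=\ell(\theta')$, $\mathrm{key}(\theta)=\mathrm{key}(\theta')$ and $X''\mathrel RY''$; symmetrically for forward transitions of $Y'$; and the same two conditions for backward transitions. $X\approx_{\mathrm{FR}}Y$ iff there is an FR bisimulation between $X$ and $Y$. *)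

From Stdlib Require Import List ZArith Relations ClassicalEpsilon.
Import ListNotations.

(* Names N := nat; co-names are a disjoint copy; keys K := nat (denumerable). *)
Inductive vis : Type := Nm (n : nat) | CoNm (n : nat).
Definition co (l : vis) : vis :=
  match l with Nm n => CoNm n | CoNm n => Nm n end.
Inductive act : Type := Vis (l : vis) | Tau.

Inductive proc : Type :=
| Nil : proc
| Pre : act -> proc -> proc
| Res : proc -> vis -> proc
| Sum : proc -> proc -> proc
| Par : proc -> proc -> proc
| Keyed : act -> nat -> proc -> proc.

Fixpoint inkeys (k : nat) (X : proc) : Prop :=
  match X with
  | Nil => False
  | Pre _ X => inkeys k X
  | Res X _ => inkeys k X
  | Sum X Y => inkeys k X \/ inkeys k Y
  | Par X Y => inkeys k X \/ inkeys k Y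
  | Keyed _ n X => k = n \/ inkeys k X
  end.

Definition nokeys (X : proc) : Prop := forall k, ~ inkeys k X.
Definition standard (X : proc) : Prop := nokeys X.

Fixpoint orig (X : proc) : proc :=
  match X with
  | Nil => Nil
  | Pre a X => Pre a (orig X)
  | Res X l => Res (orig X) l
  | Sum X Y => Sum (orig X) (orig Y)
  | Par X Y => Par (orig X) (orig Y)
  | Keyed a _ X => Pre a (orig X)
  end.

Inductive dir : Type := DL | DR.
Definition dbar (d : dir) : dir := match d with DL => DR | DR => DL end.
Inductive tag : Type := TPar (d : dir) | TSum (d : dir).

(* upsilon alpha[k]   and   upsilon <upsilon1 lambda[k], upsilon2 co(lambda)[k]> *)
Inductive plabel : Type :=
| Base : list tag -> act -> nat -> plabel
| Syn : list tag -> list tag -> vis -> list tag -> nat -> plabel.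

Definition pre (t : tag) (th : plabel) : plabel :=
  match th with
  | Base u a k => Base (t :: u) a k
  | Syn u u1 l u2 k => Syn (t :: u) u1 l u2 k
  end.

Definition lab_act (th : plabel) : act :=
  match th with Base _ a _ => a | Syn _ _ _ _ _ => Tau end.
Definition lab_key (th : plabel) : nat :=
  match th with Base _ _ k => k | Syn _ _ _ _ k => k end.

(* the D-component theta_D of <theta_L, theta_R> *)
Definition syn_comp (d : dir) (u1 : list tag) (l : vis) (u2 : list tag) (k : nat)
  : plabel :=
  match d with DL => Base u1 (Vis l) k | DR => Base u2 (Vis (co l)) k end.

Inductive step : proc -> plabel -> proc -> Prop :=
| st_act : forall a k X, nokeys X -> step (Pre a X) (Base [] a k) (Keyed a k X)
| st_pre : forall a k X th X', step X th X' -> lab_key th <> k ->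
    step (Keyed a k X) th (Keyed a k X')
| st_res : forall l X th X', step X th X' ->
    lab_act th <> Vis l -> lab_act th <> Vis (co l) ->
    step (Res X l) th (Res X' l)
| st_parL : forall X Y th X', step X th X' -> ~ inkeys (lab_key th) Y ->
    step (Par X Y) (pre (TPar DL) th) (Par X' Y)
| st_parR : forall X Y th X', step X th X' -> ~ inkeys (lab_key th) Y ->
    step (Par Y X) (pre (TPar DR) th) (Par Y X')
| st_syn : forall X Y X' Y' u1 u2 l k,
    step X (Base u1 (Vis l) k) X' -> step Y (Base u2 (Vis (co l)) k) Y' ->
    step (Par X Y) (Syn [] u1 l u2 k) (Par X' Y')
| st_sumL : forall X Y th X', step X th X' -> nokeys Y ->
    step (Sum X Y) (pre (TSum DL) th) (Sum X' Y)
| st_sumR : forall X Y th X', step X th X' -> nokeys Y ->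
    step (Sum Y X) (pre (TSum DR) th) (Sum Y X').

Record tr : Type := Tr { src : proc; lab : plabel; fwd : bool; tgt : proc }.
Definition valid (t : tr) : Prop :=
  if fwd t then step (src t) (lab t) (tgt t) else step (tgt t) (lab t) (src t).
Definition inv (t : tr) : tr := Tr (tgt t) (lab t) (negb (fwd t)) (src t).

Inductive path : proc -> list tr -> proc -> Prop :=
| path_nil : forall P, path P [] P
| path_cons : forall t r Q, valid t -> path (tgt t) r Q -> path (src t) (t :: r) Q.

Definition rooted (P : proc) : Prop := ~ exists th P', step P' th P.

Definition connected (t u : tr) : Prop := exists r, path (src t) r (tgt u).

Inductive indep : plabel -> plabel -> Prop :=
| ind_C1 : forall d th th', indep th th' -> indep (pre (TSum d) th) (pre (TSum d) th')
| ind_P1 : forall d th th', indep th th' -> indep (pre (TPar d) th) (pre (TPar d) th')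
| ind_P2 : forall d th th', lab_key th <> lab_key th' ->
    indep (pre (TPar d) th) (pre (TPar (dbar d)) th')
| ind_S1 : forall d th u1 l u2 k, indep th (syn_comp d u1 l u2 k) ->
    indep (pre (TPar d) th) (Syn [] u1 l u2 k)
| ind_S2 : forall d th u1 l u2 k, indep (syn_comp d u1 l u2 k) th ->
    indep (Syn [] u1 l u2 k) (pre (TPar d) th)
| ind_S3 : forall u1 l u2 k u1' l' u2' k',
    indep (Base u1 (Vis l) k) (Base u1' (Vis l') k') ->
    indep (Base u2 (Vis (co l)) k) (Base u2' (Vis (co l')) k') ->
    indep (Syn [] u1 l u2 k) (Syn [] u1' l' u2' k').

Definition indep_tr (t u : tr) : Prop := connected t u /\ indep (lab t) (lab u).

Inductive sim : tr -> tr -> Prop :=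
| sim_square : forall t u u' t',
    valid t -> valid u -> valid u' -> valid t' ->
    src u = src t -> src u' = tgt t -> src t' = tgt u -> tgt t' = tgt u' ->
    lab u' = lab u -> fwd u' = fwd u -> lab t' = lab t -> fwd t' = fwd t ->
    indep_tr t u -> sim t t'
| sim_refl : forall t, sim t t
| sim_sym : forall t t', sim t t' -> sim t' t
| sim_trans : forall t1 t2 t3, sim t1 t2 -> sim t2 t3 -> sim t1 t3.

Definition event := tr -> Prop.
Definition cls (t : tr) : event := fun u => sim t u.
Definition ebar (e : event) : event :=
  fun u => exists t, e t /\ sim (inv t) u.
Definition fwd_event (e : event) : Prop :=
  exists t, fwd t = true /\ valid t /\ e = cls t.

Definition dec (P : Prop) : {P} + {~ P} := excluded_middle_informative P.

Fixpoint sharp (r : list tr) (e : event) : Z :=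
  match r with
  | [] => 0%Z
  | t :: r' => (sharp r' e +
      (if dec (e t) then 1 else if dec (ebar e t) then -1 else 0))%Z
  end.

Definition in_ev (X : proc) (e : event) : Prop :=
  fwd_event e /\ exists P r, rooted P /\ path P r X /\ (sharp r e > 0)%Z.

Fixpoint ord (X : proc) : nat -> nat -> Prop :=
  match X with
  | Nil => fun _ _ => False
  | Pre _ X => ord X
  | Res X _ => ord X
  | Sum X Y => fun a b => ord X a b \/ ord Y a b
  | Par X Y => fun a b => ord X a b \/ ord Y a b
  | Keyed _ n X => fun a b => ord X a b \/ (a = n /\ inkeys b X)
  end.
Definition leX (X : proc) : nat -> nat -> Prop := clos_refl_trans nat (ord X).

(* bijections between sets of events, given by their graphs *)
Definition evmap := event -> event -> Prop.

Definition is_bij (F : evmap) (A B : event -> Prop) : Prop :=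
  (forall e e', F e e' -> A e /\ B e') /\
  (forall e, A e -> exists e', F e e') /\
  (forall e e1 e2, F e e1 -> F e e2 -> e1 = e2) /\
  (forall e1 e2 e', F e1 e' -> F e2 e' -> e1 = e2) /\
  (forall e', B e' -> exists e, F e e').

Definition label_preserving (F : evmap) : Prop :=
  forall e e', F e e' -> forall t t', e t -> e' t' ->
    lab_act (lab t) = lab_act (lab t').

Definition order_preserving (X Y : proc) (F : evmap) : Prop :=
  forall e1 e1' e2 e2', F e1 e1' -> F e2 e2' ->
  forall t1 t2 t1' t2', e1 t1 -> e2 t2 -> e1' t1' -> e2' t2' ->
    (leX X (lab_key (lab t1)) (lab_key (lab t2)) <->
     leX Y (lab_key (lab t1')) (lab_key (lab t2'))).

Definition ext (F : evmap) (e e' : event) : evmap :=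
  fun a b => F a b \/ (a = e /\ b = e').

Definition empty_map : evmap := fun _ _ => False.

Definition KP_bisim (R : proc -> proc -> evmap -> Prop) (X Y : proc) : Prop :=
  R X Y empty_map /\
  forall X' Y' F, R X' Y' F ->
    (is_bij F (in_ev X') (in_ev Y') /\ label_preserving F /\
     order_preserving X' Y' F) /\
    (forall th X'', step X' th X'' -> exists th' Y'', step Y' th' Y'' /\
       R X'' Y'' (ext F (cls (Tr X' th true X'')) (cls (Tr Y' th' true Y'')))) /\
    (forall th' Y'', step Y' th' Y'' -> exists th X'', step X' th X'' /\
       R X'' Y'' (ext F (cls (Tr X' th true X'')) (cls (Tr Y' th' true Y'')))).

Definition KP_equiv (X Y : proc) : Prop :=
  exists R F, KP_bisim R (orig X) (orig Y) /\ R X Y F.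

Definition FR_bisim (R : proc -> proc -> Prop) : Prop :=
  forall X' Y', R X' Y' ->
    (forall th X'', step X' th X'' -> exists th' Y'', step Y' th' Y'' /\
       lab_act th = lab_act th' /\ lab_key th = lab_key th' /\ R X'' Y'') /\
    (forall th' Y'', step Y' th' Y'' -> exists th X'', step X' th X'' /\
       lab_act th = lab_act th' /\ lab_key th = lab_key th' /\ R X'' Y'') /\
    (forall th X'', step X'' th X' -> exists th' Y'', step Y'' th' Y' /\
       lab_act th = lab_act th' /\ lab_key th = lab_key th' /\ R X'' Y'') /\
    (forall th' Y'', step Y'' th' Y' -> exists th X'', step X'' th X' /\
       lab_act th = lab_act th' /\ lab_key th = lab_key th' /\ R X'' Y'').

Definition FR_equiv (X Y : proc) : Prop := exists R, FR_bisim R /\ R X Y.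

(* A transition is determined by its target and its key, and transitions with
   distinct keys commute unless the key order [ord] forbids it.  Consequently,
   for X reachable from a standard process, ev(X) consists of the classes of
   forward transitions whose key is still in X and has not been undone on the
   way to X, and every key of X is the key of exactly one event of X.  An FR
   bisimulation matches labels and keys, so pairing the events of X and Y that
   carry the same key is a label-preserving bijection.  It also preserves the
   order: k1 <=_X k2 iff every process from which X is reachable and which
   contains k2 contains k1 (any <=_X-downward closed set of keys is the key
   set of such a process), and this depends only on backward transitions and
   their keys, which an FR bisimulation matches. *)

From Stdlib Require Import Lia List ZArith Relations Classical
  FunctionalExtensionality PropExtensionality.
Import ListNotations.

Lemma lab_key_pre (t : tag) (th : plabel) : lab_key (pre t th) = lab_key th.
Proof. now destruct th. Qed.

Lemma step_inkeys_tgt X th X' : step X th X' -> inkeys (lab_key th) X'.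
Proof. induction 1; simpl; rewrite ?lab_key_pre; auto. Qed.

Lemma step_notin_src X th X' : step X th X' -> ~ inkeys (lab_key th) X.
Proof.
  induction 1; simpl in *; rewrite ?lab_key_pre; try tauto.
  all: match goal with H : nokeys _ |- _ => unfold nokeys in H; firstorder end.
Qed.

Lemma step_inkeys X th X' j : step X th X' ->
  inkeys j X' <-> inkeys j X \/ j = lab_key th.
Proof.
  intros H; revert j; induction H; intro j; simpl in *; rewrite ?lab_key_pre;
    rewrite ?IHstep, ?IHstep1, ?IHstep2; try tauto.
Qed.

Lemma step_inkeys_mono X th X' j : step X th X' -> inkeys j X -> inkeys j X'.
Proof. intros H Hj; apply (step_inkeys _ _ _ _ H); auto. Qed.

Lemma step_notin_back X th X' k : step X th X' -> ~ inkeys k X' -> ~ inkeys k X.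
Proof. eauto using step_inkeys_mono. Qed.

Lemma step_nokeys_back X th X' : step X th X' -> nokeys X' -> nokeys X.
Proof. intros H H' k; eauto using step_notin_back. Qed.

Lemma step_notin_fwd X th X' k : step X th X' ->
  ~ inkeys k X -> k <> lab_key th -> ~ inkeys k X'.
Proof. intros H; rewrite (step_inkeys _ _ _ k H); tauto. Qed.

Lemma orig_standard X : standard X -> orig X = X.
Proof.
  unfold standard, nokeys; induction X as [|? ? IH|? IH|? IH1 ? IH2|? IH1 ? IH2|? n];
    simpl; intros H; try (f_equal; first [apply IH|apply IH1|apply IH2];
    intros k Hk; apply (H k); simpl; auto).
  - reflexivity.
  - exfalso; apply (H n); simpl; auto.
Qed.

Lemma ord_inkeys X a b : ord X a b -> inkeys a X /\ inkeys b X.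
Proof. induction X; simpl; tauto. Qed.

Lemma nokeys_ord X a b : nokeys X -> ~ ord X a b.
Proof. intros H Ho; apply (H a), (ord_inkeys _ _ _ Ho). Qed.

Lemma step_ord X th X' a b : step X th X' -> ord X a b -> ord X' a b.
Proof.
  intros H; revert a b; induction H; simpl; intuition eauto using step_inkeys_mono.
Qed.

Lemma step_ord_back X th X' a b : step X th X' ->
  ord X' a b -> b <> lab_key th -> ord X a b.
Proof.
  intros H; revert a b; induction H; simpl in *; rewrite ?lab_key_pre;
    intros a0 b0 Ho Hb; try (destruct Ho; eauto; fail).
  - destruct Ho as [Ho|[_ Ho]]; [destruct (nokeys_ord _ _ _ H Ho)|destruct (H b0 Ho)].
  - destruct Ho as [Ho|[E Ho]]; [eauto|].
    apply (step_inkeys _ _ _ _ H) in Ho; tauto.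
  - eauto.
Qed.

(** * Commuting transitions *)

(* Discards the impossible cases of a joint inversion of two steps: the key of
   a step occurs in its target, so it cannot also be fresh for that process. *)
Ltac key_clash := exfalso; match goal with
  | Hs : step _ _ ?Z, Hn : nokeys ?Z |- _ => apply (Hn _ (step_inkeys_tgt _ _ _ Hs))
  | Hs : step _ _ ?Z, Hn : ~ inkeys _ ?Z |- _ => apply Hn;
      let K := fresh "K" in pose proof (step_inkeys_tgt _ _ _ Hs) as K; simpl in K;
      rewrite ?lab_key_pre in K;
      first [ exact K
            | match goal with E : _ = _ |- _ =>
                first [rewrite E in K; exact K | rewrite <- E in K; exact K] end
            | subst; exact K ]
  end.

Ltac step_rule := solve
  [ (eapply st_act + eapply st_pre + eapply st_res + eapply st_parL + eapply st_parR +
     eapply st_syn + eapply st_sumL + eapply st_sumR);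
    eauto using step_notin_back, step_notin_fwd, step_nokeys_back ].

Lemma step_back_det A th B A' th' : step A th B -> step A' th' B ->
  lab_key th = lab_key th' -> A = A' /\ th = th'.
Proof.
  intros H; revert A' th'; induction H; intros A' th' H' Hk; inversion H'; subst;
    simpl in *; rewrite ?lab_key_pre in *; try key_clash;
  try match goal with IH : forall A' th', step A' th' ?X -> _ -> _, Hs : step _ _ ?X |- _ =>
    destruct (IH _ _ Hs) as [? ?]; subst; auto end.
  all: try (split; reflexivity).
  destruct (IHstep1 _ _ H5 eq_refl) as [-> E]; injection E; injection H2.
  intros; subst; auto.
Qed.

Lemma step_back_diamond A th1 B C th2 : step A th1 B -> step C th2 B ->
  lab_key th1 <> lab_key th2 -> exists D, step D th2 A /\ step D th1 C.
Proof.
  intros H; revert C th2; induction H; intros C th2 H' Hk; inversion H'; subst;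
    simpl in *; rewrite ?lab_key_pre in *; try key_clash; try congruence.
  all: try (destruct (IHstep1 _ _ H5 ltac:(simpl; congruence)) as [D [D1 D2]];
            destruct (IHstep2 _ _ H6 ltac:(simpl; congruence)) as [D0 [D3 D4]]).
  all: try match goal with
    | IH : forall C th2, step C th2 ?X' -> _ -> exists D, _, Hs : step _ _ ?X' |- _ =>
        destruct (IH _ _ Hs ltac:(simpl; congruence)) as [D [D1 D2]] end.
  all: eexists; split; step_rule.
Qed.

Lemma step_back_indep A th1 B C th2 : step A th1 B -> step C th2 B ->
  lab_key th1 <> lab_key th2 -> indep th1 th2.
Proof.
  intros H; revert C th2; induction H; intros C th2 H' Hk; inversion H'; subst;
    simpl in *; rewrite ?lab_key_pre in *; try key_clash; try congruence.
  all: try (match goal with IH : forall C th2, step C th2 ?X' -> _ -> indep _ _,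
   Hs : step _ _ ?X' |- _ => pose proof (IH _ _ Hs ltac:(simpl; congruence)) end).
  all: try solve
    [ assumption | constructor; auto | apply (ind_P2 DL); auto | apply (ind_P2 DR); auto
    | apply (ind_S1 DL); simpl; auto | apply (ind_S1 DR); simpl; auto
    | apply (ind_S2 DL); simpl; auto | apply (ind_S2 DR); simpl; auto ].
  apply ind_S3; [apply (IHstep1 _ _ H5)|apply (IHstep2 _ _ H6)]; simpl; congruence.
Qed.

Lemma step_swap_distinct D thm W th W1 : step D thm W -> step W th W1 ->
  ~ ord W1 (lab_key thm) (lab_key th) -> lab_key thm <> lab_key th ->
  exists E, step D th E /\ step E thm W1.
Proof.
  intros H; revert th W1; induction H; intros th2 W1 H' Ho Hmp; inversion H'; subst;
    simpl in *; rewrite ?lab_key_pre in *; try key_clash.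
  all: try solve [exfalso; apply Ho; right; split; eauto using step_inkeys_tgt].
  all: try (destruct (IHstep1 _ _ H3 ltac:(simpl in *; tauto) ltac:(simpl in *; congruence))
              as [E [E1 E2]];
            destruct (IHstep2 _ _ H6 ltac:(simpl in *; tauto) ltac:(simpl in *; congruence))
              as [E0 [E3 E4]]).
  all: try match goal with
    | IH : forall th W1, step ?X' th W1 -> _ -> _ -> exists E, _, Hs : step ?X' _ _ |- _ =>
        destruct (IH _ _ Hs ltac:(simpl in *; tauto) ltac:(simpl in *; congruence))
          as [E [E1 E2]] end.
  all: eexists; split; step_rule.
Qed.

Lemma step_swap D thm W th W1 : step D thm W -> step W th W1 ->
  ~ ord W1 (lab_key thm) (lab_key th) -> exists E, step D th E /\ step E thm W1.
Proof.
  intros H H' Ho; apply (step_swap_distinct _ _ _ _ _ H H' Ho).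
  intros E; apply (step_notin_src _ _ _ H'); rewrite <- E; eapply step_inkeys_tgt; eauto.
Qed.

(** * Events *)

Inductive reach_by (ok : plabel -> Prop) : proc -> proc -> Prop :=
| reach_refl X : reach_by ok X X
| reach_cons X th X1 Y : step X th X1 -> ok th -> reach_by ok X1 Y -> reach_by ok X Y.

Notation reach := (reach_by (fun _ => True)).

Definition avoiding (k : nat) (th : plabel) : Prop := lab_key th <> k.

Lemma reach_by_snoc ok X Y th Z : reach_by ok X Y -> step Y th Z -> ok th ->
  reach_by ok X Z.
Proof. induction 1; intros; eauto using reach_refl, reach_cons. Qed.

Lemma reach_by_reach ok X Y : reach_by ok X Y -> reach X Y.
Proof. induction 1; eauto using reach_refl, reach_cons. Qed.

Lemma reach_preserved (I : proc -> Prop) X Y :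
  (forall X th X', I X -> step X th X' -> I X') -> reach X Y -> I X -> I Y.
Proof. intros HI H; induction H; eauto. Qed.

Lemma reach_inkeys X Y k : reach X Y -> inkeys k X -> inkeys k Y.
Proof. induction 1; eauto using step_inkeys_mono. Qed.

Lemma reach_ord X Y a b : reach X Y -> ord X a b -> ord Y a b.
Proof. induction 1; eauto using step_ord. Qed.

Lemma reach_path X Y : reach X Y -> exists r, path X r Y.
Proof.
  induction 1 as [|X th X1 Y Hs _ _ [r Hr]]; [exists []; constructor|].
  exists (Tr X th true X1 :: r); now apply (path_cons (Tr X th true X1)).
Qed.

Lemma standard_rooted P : standard P -> rooted P.
Proof. intros H [th [P' Hs]]; exact (H _ (step_inkeys_tgt _ _ _ Hs)). Qed.

Lemma sim_lab t t' : sim t t' -> lab t = lab t' /\ fwd t = fwd t'.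
Proof. induction 1; intuition congruence. Qed.

Lemma valid_inv t : valid t -> valid (inv t).
Proof. destruct t as [? ? [|] ?]; auto. Qed.

Lemma inv_inv t : inv (inv t) = t.
Proof. destruct t as [? ? [|] ?]; reflexivity. Qed.

Lemma sim_inv t t' : sim t t' -> sim (inv t) (inv t').
Proof.
  induction 1 as [t u u' t' Vt Vu Vu' Vt' Su Su' St' Tt' Lu Fu Lt Ft [_ Hi]| | |];
    eauto using sim.
  apply (sim_square (inv t) u' u (inv t')); auto using valid_inv; simpl; try congruence.
  split; simpl; [exists [u']|congruence].
  unfold inv; simpl; rewrite <- Su'; apply (path_cons u'); auto using path.
Qed.

Lemma cls_eq t t' : sim t t' -> cls t = cls t'.
Proof.
  intros H; apply functional_extensionality; intro u.
  apply propositional_extensionality; unfold cls; split; eauto using sim.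
Qed.

Lemma cls_mem t t' : cls t t' <-> cls t = cls t'.
Proof.
  split; [apply cls_eq|intros E].
  assert (H : cls t' t') by apply sim_refl. now rewrite <- E in H.
Qed.

Lemma ebar_cls t0 t : ebar (cls t0) t <-> cls t0 = cls (inv t).
Proof.
  split.
  - intros [s [H1 H2]]; apply cls_eq.
    apply sim_inv in H2; rewrite inv_inv in H2; eauto using sim.
  - intros E; exists (inv t); split; [now apply cls_mem|rewrite inv_inv; apply sim_refl].
Qed.

Lemma sim_square_fwd A th1 B th2 C D :
  step A th1 B -> step A th2 C -> step B th2 D -> step C th1 D ->
  lab_key th1 <> lab_key th2 -> sim (Tr A th1 true B) (Tr C th1 true D).
Proof.
  intros H1 H2 H3 H4 Hk.
  apply (sim_square _ (Tr A th2 true C) (Tr B th2 true D)); simpl; auto.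
  split; simpl.
  - exists [Tr A th2 true C]; apply (path_cons (Tr A th2 true C)); auto using path.
  - exact (step_back_indep _ _ _ _ _ H4 H3 Hk).
Qed.

Lemma undo_avoiding X th X' W : step X th X' ->
  reach_by (avoiding (lab_key th)) W X' ->
  exists D thD, step D thD W /\ lab_key thD = lab_key th.
Proof.
  intros Hs H; revert Hs; induction H as [|W th1 W1 Y H1 Hk _ IH]; intros Hs; [eauto|].
  destruct (IH Hs) as [D [thD [HD Ek]]].
  destruct (step_back_diamond _ _ _ _ _ H1 HD) as [V [V1 _]]; [congruence|eauto].
Qed.

Lemma reach_avoiding_step_back j W X th X' :
  reach_by (avoiding j) W X' -> step X th X' -> lab_key th <> j ->
  reach_by (avoiding j) W X \/
  exists D thD, step D thD W /\ lab_key thD = lab_key th /\ reach_by (avoiding j) D X.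
Proof.
  intros H Hs Hj; revert Hs; induction H as [|W th1 W1 Y H1 Hk HR IH]; intros Hs.
  - right; exists X, th; repeat split; auto using reach_refl.
  - destruct (IH Hs) as [IH'|[D [thD [HD [Ek HDX]]]]];
      [left; eauto using reach_refl, reach_cons|].
    destruct (PeanoNat.Nat.eq_dec (lab_key th1) (lab_key th)) as [E|E].
    + destruct (step_back_det _ _ _ _ _ H1 HD ltac:(congruence)); subst; auto.
    + destruct (step_back_diamond _ _ _ _ _ H1 HD ltac:(congruence)) as [V [V1 V2]].
      right; exists V, thD; eauto using reach_refl, reach_cons.
Qed.

Lemma reach_avoiding_sim X th X' W A thA : step X th X' ->
  reach_by (avoiding (lab_key th)) W X' -> step A thA W -> lab_key thA = lab_key th ->
  sim (Tr A thA true W) (Tr X th true X').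
Proof.
  intros Hs H; revert Hs A thA; induction H as [|W th0 W1 Y H0 Hk HR IH];
    intros Hs A thA HA Ek.
  - destruct (step_back_det _ _ _ _ _ HA Hs Ek); subst; apply sim_refl.
  - destruct (undo_avoiding _ _ _ _ Hs HR) as [D [thD [H1 Ek']]].
    destruct (step_back_diamond _ _ _ _ _ H0 H1 ltac:(congruence)) as [V [V1 V2]].
    destruct (step_back_det _ _ _ _ _ V1 HA ltac:(congruence)); subst.
    apply sim_trans with (Tr D thA true W1); [|now apply IH].
    apply sim_square_fwd with th0; auto; congruence.
Qed.

(* The events of ev(X), described without paths: the class of a forward
   transition from whose target X is reached without touching its key. *)
Definition key_event (X : proc) (e : event) : Prop :=
  exists A th W, step A th W /\ e = cls (Tr A th true W) /\
    reach_by (avoiding (lab_key th)) W X.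

Definition has_key (e : event) (k : nat) : Prop :=
  exists t, e = cls t /\ lab_key (lab t) = k.

Lemma has_key_mem e k t : has_key e k -> e t -> lab_key (lab t) = k.
Proof. intros [s [-> <-]] Ht; now destruct (sim_lab _ _ Ht) as [-> _]. Qed.

Lemma has_key_uniq e k1 k2 : has_key e k1 -> has_key e k2 -> k1 = k2.
Proof.
  intros H1 [s [-> <-]]; symmetry; apply (has_key_mem _ _ _ H1), sim_refl.
Qed.

Lemma has_key_cls t : has_key (cls t) (lab_key (lab t)).
Proof. now exists t. Qed.

Lemma key_event_has_key X e : key_event X e -> exists k, has_key e k /\ inkeys k X.
Proof.
  intros [A [th [W [Hs [-> HR]]]]]; exists (lab_key th); split; [apply has_key_cls|].
  eauto using reach_inkeys, reach_by_reach, step_inkeys_tgt.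
Qed.

Lemma key_event_key X e k : key_event X e -> has_key e k -> inkeys k X.
Proof.
  intros H Hk; destruct (key_event_has_key _ _ H) as [k' [Hk' Hin]].
  now rewrite (has_key_uniq _ _ _ Hk Hk').
Qed.

Lemma key_event_new X th X' : step X th X' -> ~ key_event X (cls (Tr X th true X')).
Proof.
  intros Hs H; apply (step_notin_src _ _ _ Hs).
  exact (key_event_key _ _ _ H (has_key_cls (Tr X th true X'))).
Qed.

Lemma key_event_step X th X' e : step X th X' ->
  key_event X' e <-> key_event X e \/ e = cls (Tr X th true X').
Proof.
  intros Hs; split.
  - intros [A [thA [W [HA [-> HR]]]]].
    destruct (PeanoNat.Nat.eq_dec (lab_key thA) (lab_key th)) as [E|E].
    + right; apply cls_eq; rewrite E in HR; eauto using reach_avoiding_sim.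
    + destruct (reach_avoiding_step_back _ _ _ _ _ HR Hs (not_eq_sym E))
        as [HX|[D [thD [HD [Ek HDX]]]]]; [left; exists A, thA, W; auto|].
      destruct (step_back_diamond _ _ _ _ _ HA HD ltac:(congruence)) as [V [V1 V2]].
      left; exists V, thA, D; repeat split; auto.
      apply cls_eq, sim_sym, sim_square_fwd with thD; auto; congruence.
  - intros [[A [thA [W [HA [-> HR]]]]]| ->].
    + exists A, thA, W; repeat split; auto.
      apply reach_by_snoc with (Y := X) (th := th); auto.
      intros E; apply (step_notin_src _ _ _ Hs); rewrite E.
      eauto using reach_inkeys, reach_by_reach, step_inkeys_tgt.
    + exists X, th, X'; auto using reach_refl.
Qed.

Lemma standard_no_key_event P e : standard P -> ~ key_event P e.
Proof. intros HP H; destruct (key_event_has_key _ _ H) as [k [_ Hk]]; exact (HP k Hk). Qed.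

Lemma cls_eq_fwd t t' : cls t = cls t' -> fwd t = fwd t'.
Proof. intros E; apply cls_mem in E; apply (sim_lab _ _ E). Qed.

Definition count (A : Prop) : Z := if dec A then 1%Z else 0%Z.

Lemma count_key_event_step X th X' e : step X th X' ->
  count (key_event X' e) =
  (count (key_event X e) + count (e = cls (Tr X th true X')))%Z.
Proof.
  intros Hs; pose proof (key_event_step X th X' e Hs) as Step.
  pose proof (key_event_new X th X' Hs) as New.
  unfold count; destruct (dec (e = cls (Tr X th true X'))) as [->|];
    destruct (dec (key_event X' _)), (dec (key_event X _)); tauto || lia.
Qed.

Lemma sharp_increment t t0 : valid t -> fwd t0 = true ->
  (if dec (cls t0 t) then 1 else if dec (ebar (cls t0) t) then -1 else 0)%Z =
  (count (key_event (tgt t) (cls t0)) - count (key_event (src t) (cls t0)))%Z.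
Proof.
  destruct t as [A th [|] B]; unfold valid; simpl; intros Hv Hf.
  - rewrite (count_key_event_step _ _ _ _ Hv); unfold count.
    destruct (dec (cls t0 _)) as [S|S]; rewrite cls_mem in S;
      destruct (dec (cls t0 = _)); try tauto; [lia|].
    destruct (dec (ebar _ _)) as [Hb|]; [|lia].
    rewrite ebar_cls in Hb; apply cls_eq_fwd in Hb; simpl in Hb; congruence.
  - rewrite (count_key_event_step _ _ _ _ Hv); unfold count.
    destruct (dec (cls t0 _)) as [S|].
    + rewrite cls_mem in S; apply cls_eq_fwd in S; simpl in S; congruence.
    + destruct (dec (ebar _ _)) as [Hb|Hb]; rewrite ebar_cls in Hb; simpl in Hb;
        destruct (dec (cls t0 = _)); tauto || lia.
Qed.

Lemma sharp_path P0 r X t0 : path P0 r X -> fwd t0 = true ->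
  sharp r (cls t0) =
  (count (key_event X (cls t0)) - count (key_event P0 (cls t0)))%Z.
Proof.
  intros H Hf; induction H as [|t r Q Hv _ IH]; simpl; [lia|].
  rewrite IH, (sharp_increment _ _ Hv Hf); lia.
Qed.

Lemma in_ev_key_event P X : standard P -> reach P X -> in_ev X = key_event X.
Proof.
  intros HP HX; apply functional_extensionality; intro e.
  apply propositional_extensionality; split.
  - intros [[t0 [Hf [_ ->]]] [P0 [r [_ [Hr Hs]]]]].
    rewrite (sharp_path _ _ _ _ Hr Hf) in Hs; unfold count in Hs.
    destruct (dec (key_event X _)), (dec (key_event P0 _)); auto; lia.
  - intros HE; pose proof HE as [A [th [W [Hs [-> _]]]]].
    split; [exists (Tr A th true W); auto|].
    destruct (reach_path _ _ HX) as [r Hr].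
    exists P, r; repeat split; auto using standard_rooted.
    rewrite (sharp_path _ _ _ (Tr A th true W) Hr eq_refl); unfold count.
    pose proof (standard_no_key_event P (cls (Tr A th true W)) HP).
    destruct (dec (key_event X _)), (dec (key_event P _)); tauto || lia.
Qed.

Lemma key_event_exists P X k : standard P -> reach P X -> inkeys k X ->
  exists e, key_event X e /\ has_key e k.
Proof.
  intros HP HX; revert k.
  apply (reach_preserved (fun X => forall k, inkeys k X ->
    exists e, key_event X e /\ has_key e k) P X); auto.
  - intros Y th Y' IH Hs k Hk; apply (step_inkeys _ _ _ _ Hs) in Hk as [Hk| ->].
    + destruct (IH k Hk) as [e [He Hke]].
      exists e; split; auto; apply (key_event_step _ _ _ _ Hs); auto.
    + exists (cls (Tr Y th true Y')); split; [|apply has_key_cls].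
      apply (key_event_step _ _ _ _ Hs); auto.
  - intros k Hk; destruct (HP k Hk).
Qed.

Lemma key_event_unique P X e1 e2 k : standard P -> reach P X ->
  key_event X e1 -> key_event X e2 -> has_key e1 k -> has_key e2 k -> e1 = e2.
Proof.
  intros HP HX; revert e1 e2 k.
  apply (reach_preserved (fun X => forall e1 e2 k, key_event X e1 -> key_event X e2 ->
    has_key e1 k -> has_key e2 k -> e1 = e2) P X); auto.
  - intros Y th Y' IH Hs e1 e2 k H1 H2 K1 K2.
    assert (Fresh : forall e, key_event Y e -> ~ has_key e (lab_key th))
      by (intros e He Hk; exact (step_notin_src _ _ _ Hs (key_event_key _ _ _ He Hk))).
    pose proof (has_key_cls (Tr Y th true Y')) as Knew; simpl in Knew.
    apply (key_event_step _ _ _ _ Hs) in H1; apply (key_event_step _ _ _ _ Hs) in H2.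
    destruct H1 as [H1| ->], H2 as [H2| ->]; eauto.
    + rewrite (has_key_uniq _ _ _ K2 Knew) in K1; now destruct (Fresh e1).
    + rewrite (has_key_uniq _ _ _ K1 Knew) in K2; now destruct (Fresh e2).
  - intros e1 e2 k H1; destruct (standard_no_key_event _ _ HP H1).
Qed.

Definition same_keys (X Y : proc) : Prop := forall k, inkeys k X <-> inkeys k Y.

Definition key_matching (X Y : proc) : evmap := fun e e' =>
  key_event X e /\ key_event Y e' /\ exists k, has_key e k /\ has_key e' k.

Lemma key_matching_bij P Q X Y : standard P -> standard Q ->
  reach P X -> reach Q Y -> same_keys X Y ->
  is_bij (key_matching X Y) (key_event X) (key_event Y).
Proof.
  intros HP HQ HX HY HK; split; [|split; [|split; [|split]]].
  - intros e e' (He & He' & _); auto.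
  - intros e He; destruct (key_event_has_key _ _ He) as [k [Hk Hin]].
    destruct (key_event_exists Q Y k HQ HY (proj1 (HK k) Hin)) as [e' [He' Hk']].
    exists e'; repeat split; eauto.
  - intros e e1 e2 [_ [H1 [k1 [K1 K1']]]] [_ [H2 [k2 [K2 K2']]]].
    rewrite (has_key_uniq _ _ _ K1 K2) in K1'; eauto using key_event_unique.
  - intros e1 e2 e' [H1 [_ [k1 [K1 K1']]]] [H2 [_ [k2 [K2 K2']]]].
    rewrite (has_key_uniq _ _ _ K1' K2') in K1; eauto using key_event_unique.
  - intros e' He'; destruct (key_event_has_key _ _ He') as [k [Hk Hin]].
    destruct (key_event_exists P X k HP HX (proj2 (HK k) Hin)) as [e [He Hke]].
    exists e; repeat split; eauto.
Qed.

(** * The key order *)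

Definition key_dep (X : proc) (a b : nat) : Prop :=
  forall W, reach W X -> inkeys b W -> inkeys a W.

Lemma ord_key_dep X a b : ord X a b -> key_dep X a b.
Proof.
  intros Ho W HW.
  assert (G : ord W a b \/ ~ inkeys b W).
  { revert Ho; induction HW as [|W th W1 Y Hs _ _ IH]; intros Ho; auto.
    destruct (IH Ho) as [H|H].
    - destruct (PeanoNat.Nat.eq_dec b (lab_key th)) as [->|E].
      + right; exact (step_notin_src _ _ _ Hs).
      + left; eauto using step_ord_back.
    - right; eauto using step_notin_back. }
  intros Hb; destruct G as [G|G]; [exact (proj1 (ord_inkeys _ _ _ G))|tauto].
Qed.

Lemma leX_key_dep X a b : leX X a b -> key_dep X a b.
Proof.
  induction 1 as [a b H| |a b c _ IH1 _ IH2]; [now apply ord_key_dep|now intros W|].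
  intros W HW Hc; exact (IH1 W HW (IH2 W HW Hc)).
Qed.

Lemma step_replay W0 X th X' : reach W0 X -> step X th X' ->
  (forall m, inkeys m X -> ~ inkeys m W0 -> ~ ord X' m (lab_key th)) ->
  exists W, reach W X' /\ step W0 th W.
Proof.
  intros H; revert th X'.
  induction H as [X|W0 th1 W1 X H1 _ HR IH]; intros th X' Hs Hm; [eauto using reach_refl|].
  destruct (IH th X' Hs) as [W2 [HW2 S2]].
  { intros m Hm1 Hm2; eauto using step_notin_back. }
  destruct (step_swap _ _ _ _ _ H1 S2) as [E [E1 E2]].
  - intros Ho; apply (reach_ord _ _ _ _ HW2) in Ho; revert Ho.
    apply Hm; [|exact (step_notin_src _ _ _ H1)].
    exact (reach_inkeys _ _ _ HR (step_inkeys_tgt _ _ _ H1)).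
  - exists E; split; [apply reach_cons with th1 W2|]; auto.
Qed.

Lemma past_of_down_closed P X (S : nat -> Prop) : standard P -> reach P X ->
  (forall c d, ord X c d -> S d -> S c) ->
  exists W, reach W X /\ forall c, inkeys c W <-> inkeys c X /\ S c.
Proof.
  intros HP HX; revert S.
  apply (reach_preserved (fun X => forall S : nat -> Prop,
    (forall c d, ord X c d -> S d -> S c) ->
    exists W, reach W X /\ forall c, inkeys c W <-> inkeys c X /\ S c) P X); auto.
  - intros Y th Y' IH Hs S HS.
    destruct (IH S) as [W0 [HW0 K0]]; [eauto using step_ord|].
    (* replay the last transition in the past state if its key is in S, skip it otherwise *)
    destruct (classic (S (lab_key th))) as [Sth|Sth].
    + destruct (step_replay _ _ _ _ HW0 Hs) as [W [HW S1]].
      { intros m Hm Hm0 Ho; apply Hm0, K0; eauto. }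
      exists W; split; auto; intro c.
      rewrite (step_inkeys _ _ _ _ S1), (step_inkeys _ _ _ _ Hs), K0.
      split; [intros [[? ?]| ->]|intros [[?| ->] ?]]; auto.
    + exists W0; split; [apply reach_by_snoc with Y th; auto|intro c].
      rewrite (step_inkeys _ _ _ _ Hs), K0.
      split; [intros [? ?]|intros [[?| ->] ?]]; tauto.
  - intros S _; exists P; split; [apply reach_refl|].
    intro c; split; [intros Hc|intros [Hc _]]; destruct (HP c Hc).
Qed.

Lemma leX_iff_key_dep P X a b : standard P -> reach P X -> inkeys b X ->
  leX X a b <-> key_dep X a b.
Proof.
  intros HP HX Hb; split; [apply leX_key_dep|intros HD].
  apply NNPP; intros HN.
  (* the past state keeping exactly the keys below b contains b but not a *)
  destruct (past_of_down_closed P X (fun c => leX X c b) HP HX) as [W [HW K]].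
  { intros c d H1 H2; apply rt_trans with d; auto using rt_step. }
  apply HN, K, HD; auto; apply K; split; [exact Hb|apply rt_refl].
Qed.

Definition back_sim (R : proc -> proc -> Prop) : Prop :=
  forall X Y, R X Y -> forall th' Y', step Y' th' Y ->
    exists th X', step X' th X /\ lab_key th = lab_key th' /\ R X' Y'.

Lemma FR_bisim_back_sim RF : FR_bisim RF -> back_sim RF.
Proof.
  intros H X Y HXY th' Y' Hs.
  destruct (proj2 (proj2 (proj2 (H X Y HXY))) th' Y' Hs) as [th [X' [? [_ [? ?]]]]].
  eauto.
Qed.

Lemma FR_bisim_back_sim_flip RF : FR_bisim RF -> back_sim (fun Y X => RF X Y).
Proof.
  intros H Y X HXY th' X' Hs.
  destruct (proj1 (proj2 (proj2 (H X Y HXY))) th' X' Hs) as [th [Y' [? [_ [? ?]]]]].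
  eauto.
Qed.

Lemma same_keys_step X th X' Y th' Y' : step X th X' -> step Y th' Y' ->
  lab_key th = lab_key th' -> same_keys X Y -> same_keys X' Y'.
Proof.
  intros H1 H2 Ek HK k.
  rewrite (step_inkeys _ _ _ _ H1), (step_inkeys _ _ _ _ H2), (HK k), Ek; tauto.
Qed.

Lemma same_keys_step_back X th X' Y th' Y' : step X th X' -> step Y th' Y' ->
  lab_key th = lab_key th' -> same_keys X' Y' -> same_keys X Y.
Proof.
  intros H1 H2 Ek HK k.
  pose proof (step_notin_src _ _ _ H1); pose proof (step_notin_src _ _ _ H2).
  split; intros Hk.
  - destruct (proj1 (step_inkeys _ _ _ k H2))
      as [?| ->]; [apply HK, (step_inkeys_mono _ _ _ _ H1 Hk)|auto|congruence].
  - destruct (proj1 (step_inkeys _ _ _ k H1))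
      as [?| ->]; [apply HK, (step_inkeys_mono _ _ _ _ H2 Hk)|auto|congruence].
Qed.

Lemma back_sim_past R X Y W' : back_sim R -> R X Y -> same_keys X Y -> reach W' Y ->
  exists W, reach W X /\ R W W' /\ same_keys W W'.
Proof.
  intros HR HXY HK H; induction H as [|W' th' W1' Y H1 _ _ IH]; [eauto using reach_refl|].
  destruct (IH HXY HK) as [W1 [HW1 [R1 K1]]].
  destruct (HR _ _ R1 _ _ H1) as [th [W [Hs [Ek RW]]]].
  exists W; repeat split; [apply reach_cons with th W1|..]; auto;
    apply (same_keys_step_back _ _ _ _ _ _ Hs H1 Ek K1).
Qed.

Lemma key_dep_transfer R X Y a b : back_sim R -> R X Y -> same_keys X Y ->
  key_dep X a b -> key_dep Y a b.
Proof.
  intros HR HXY HK HD W' HW' Hb.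
  destruct (back_sim_past R X Y W' HR HXY HK HW') as [W [HW [_ K]]].
  apply K, HD, K; auto.
Qed.

Lemma FR_bisim_leX P Q RF X Y a b : FR_bisim RF -> standard P -> standard Q ->
  reach P X -> reach Q Y -> RF X Y -> same_keys X Y -> inkeys b X ->
  leX X a b <-> leX Y a b.
Proof.
  intros HRF HP HQ HX HY HXY HK Hb.
  rewrite (leX_iff_key_dep P X a b), (leX_iff_key_dep Q Y a b); auto; [|now apply HK].
  split; [apply (key_dep_transfer RF X)|apply (key_dep_transfer (fun Y X => RF X Y) Y)];
    auto using FR_bisim_back_sim, FR_bisim_back_sim_flip.
  intro k; now rewrite (HK k).
Qed.

(** * The KP bisimulation *)

Definition kp_rel (P Q : proc) (RF : proc -> proc -> Prop) (X Y : proc) (F : evmap)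
  : Prop :=
  reach P X /\ reach Q Y /\ RF X Y /\ same_keys X Y /\
  F = key_matching X Y /\ label_preserving F.

Lemma kp_rel_init P Q RF : standard P -> standard Q -> RF P Q ->
  kp_rel P Q RF P Q empty_map.
Proof.
  intros HP HQ HPQ; repeat split; auto using reach_refl.
  - intros Hk; destruct (HP k Hk).
  - intros Hk; destruct (HQ k Hk).
  - apply functional_extensionality; intro e; apply functional_extensionality; intro e'.
    apply propositional_extensionality; split; [intros []|intros [He _]].
    destruct (standard_no_key_event _ _ HP He).
  - intros e e' [].
Qed.

Lemma key_matching_ext X th X' Y th' Y' : step X th X' -> step Y th' Y' ->
  lab_key th = lab_key th' -> same_keys X Y ->
  ext (key_matching X Y) (cls (Tr X th true X')) (cls (Tr Y th' true Y')) =
  key_matching X' Y'.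
Proof.
  intros H1 H2 Ek HK.
  apply functional_extensionality; intro e; apply functional_extensionality; intro e'.
  apply propositional_extensionality; unfold ext, key_matching.
  rewrite (key_event_step _ _ _ e H1), (key_event_step _ _ _ e' H2).
  pose proof (has_key_cls (Tr X th true X')) as K1.
  pose proof (has_key_cls (Tr Y th' true Y')) as K2; simpl in K1, K2; rewrite <- Ek in K2.
  split.
  - intros [(E1 & E2 & Hk)|[-> ->]]; [tauto|repeat split; eauto].
  - intros [[E1| ->] [[E2| ->] [k [Hk Hk']]]].
    + left; eauto.
    + rewrite (has_key_uniq _ _ _ Hk' K2) in Hk.
      destruct (step_notin_src _ _ _ H1 (key_event_key _ _ _ E1 Hk)).
    + rewrite (has_key_uniq _ _ _ Hk K1), Ek in Hk'.
      destruct (step_notin_src _ _ _ H2 (key_event_key _ _ _ E2 Hk')).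
    + now right.
Qed.

Lemma label_preserving_ext F X th X' Y th' Y' : label_preserving F ->
  lab_act th = lab_act th' ->
  label_preserving (ext F (cls (Tr X th true X')) (cls (Tr Y th' true Y'))).
Proof.
  intros HL Ea e e' [H|[-> ->]] t t' Ht Ht'; [eapply HL; eauto|].
  destruct (sim_lab _ _ Ht) as [<- _], (sim_lab _ _ Ht') as [<- _]; exact Ea.
Qed.

Lemma kp_rel_step P Q RF X th X' Y th' Y' F : kp_rel P Q RF X Y F ->
  step X th X' -> step Y th' Y' -> lab_act th = lab_act th' ->
  lab_key th = lab_key th' -> RF X' Y' ->
  kp_rel P Q RF X' Y' (ext F (cls (Tr X th true X')) (cls (Tr Y th' true Y'))).
Proof.
  intros (HX & HY & _ & HK & -> & HL) H1 H2 Ea Ek HR.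
  refine (conj _ (conj _ (conj HR (conj _ (conj _ _)))));
    eauto using reach_by_snoc, same_keys_step, key_matching_ext, label_preserving_ext.
Qed.

Lemma kp_rel_order_preserving P Q RF X Y F : FR_bisim RF ->
  standard P -> standard Q -> kp_rel P Q RF X Y F -> order_preserving X Y F.
Proof.
  intros HRF HP HQ (HX & HY & HXY & HK & -> & _)
    e1 e1' e2 e2' (_ & _ & k1 & K1 & K1') (E2 & _ & k2 & K2 & K2')
    t1 t2 t1' t2' T1 T2 T1' T2'.
  rewrite (has_key_mem _ _ _ K1 T1), (has_key_mem _ _ _ K2 T2),
    (has_key_mem _ _ _ K1' T1'), (has_key_mem _ _ _ K2' T2').
  eauto using FR_bisim_leX, key_event_key.
Qed.

Lemma kp_rel_events P Q RF X Y F : FR_bisim RF ->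
  standard P -> standard Q -> kp_rel P Q RF X Y F ->
  is_bij F (in_ev X) (in_ev Y) /\ label_preserving F /\ order_preserving X Y F.
Proof.
  intros HRF HP HQ HF; split; [|split; [apply HF|eauto using kp_rel_order_preserving]].
  destruct HF as (HX & HY & _ & HK & -> & _).
  rewrite (in_ev_key_event P X), (in_ev_key_event Q Y); auto.
  now apply (key_matching_bij P Q).
Qed.

Theorem proposition7p18 (P Q : proc) :
  standard P -> standard Q -> FR_equiv P Q -> KP_equiv P Q.
Proof.
  intros HP HQ [RF [HRF HPQ]].
  exists (kp_rel P Q RF), empty_map.
  rewrite !orig_standard by assumption.
  assert (Init : kp_rel P Q RF P Q empty_map) by now apply kp_rel_init.
  split; [split; [exact Init|]|exact Init].
  intros X Y F HF; split; [now apply (kp_rel_events P Q RF)|].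
  destruct (HRF X Y (proj1 (proj2 (proj2 HF)))) as (Fwd & Fwd' & _).
  split.
  - intros th X' Hs; destruct (Fwd th X' Hs) as (th' & Y' & Hs' & Ea & Ek & HR).
    exists th', Y'; split; eauto using kp_rel_step.
  - intros th' Y' Hs'; destruct (Fwd' th' Y' Hs') as (th & X' & Hs & Ea & Ek & HR).
    exists th, X'; split; eauto using kp_rel_step.
Qed.
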